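(* Let $i,j\in\{1,2\}$ and let $\varphi(x)$ be a formula of the correspondence language whose only free variable is $x$. Then $\varphi(x)$ is logically equivalent to $ST_{ij}(I,x)$ for some modal intuitionistic formula $I$ if and only if there exists $k\in\mathbb{N}$ such that $\varphi(x)$ is invariant with respect to $(i,j)$-modal $k$-asimulations.
   Context: Correspondence language: classical first-order logic without identity over the vocabulary $\Sigma=\{R,R_\Box,R_\Diamond,P_1,P_2,\dots\}$, where $R,R_\Box,R_\Diamond$ are binary and each $P_n$ is unary; connectives $\bot,\to,\vee,\wedge$ and quantifiers $\forall,\exists$. $\Theta$ denotes a subset of $\Sigma$ containing $R,R_\Box,R_\Diamond$; a $\Theta$-model $M=\langle U,\iota\rangle$ interprets the letters of $\Theta$. For models $M_k=\langle U_k,\iota_k\rangle$ write $R_k=\iota_k(R)$, $R_{\Box k}=\iota_k(R_\Box)$, $R_{\Diamond k}=\iota_k(R_\Diamond)$. For a formula $\varphi$, $\Sigma_\varphi=\{R,R_\Box,R_\Diamond\}\cup\{P_n: P_n\text{ occurs in }\varphi\}$. For $\varphi(x)$ with sole free variable $x$, $M,a\models\varphi(x)$ means $\varphi$ holds under any assignment sending $x$ to $a$; $a\models_k\varphi(x)$ abbreviates $M_k,a\models\varphi(x)$. $s\overset{\leftrightarrow}{A}t$ means $sAt$ and $tAs$. Modal intuitionistic formulas are built from propositional letters $p_n$ and $\bot$ with $\wedge,\vee,\to,\Box,\Diamond$. For $i,j\in\{1,2\}$ the standard translation $ST_{ij}$ is: $ST_{ij}(p_n,x)=P_n(x)$; $ST_{ij}(\bot,x)=\bot$;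 $ST_{ij}$ commutes with $\wedge,\vee$; $ST_{ij}(I\to J,x)=\forall y(R(x,y)\to(ST_{ij}(I,y)\to ST_{ij}(J,y)))$; $ST_{1j}(\Box I,x)=\forall y(R_\Box(x,y)\to ST_{1j}(I,y))$; $ST_{2j}(\Box I,x)=\forall y(R(x,y)\to\forall z(R_\Box(y,z)\to ST_{2j}(I,z)))$; $ST_{i1}(\Diamond I,x)=\exists y(R_\Diamond(x,y)\wedge ST_{i1}(I,y))$; $ST_{i2}(\Diamond I,x)=\forall y(R(x,y)\to\exists z(R_\Diamond(y,z)\wedge ST_{i2}(I,z)))$ (bound variables fresh). $k$-asimulation conditions. Let $(M_1,t),(M_2,u)$ be pointed $\Theta$-models and $k\in\mathbb{N}$. Relations $A,B$ relate finite nonempty tuples. The following conditions are required for all $i,j\in\{1,2\}$, all $m$, all $\bar a_m,a,c,e\in U_i$, $\bar b_m,b,d,f\in U_j$ and all unary $P\in\Theta$: (p-type) $A\subseteq\bigcup_{n>0}((U_1^n\times U_2^n)\cup(U_2^n\times U_1^n))$; (p-B-type) same for $B$; (elem) $t\,A\,u$; (p-base) if $(\bar a_m,a)A(\bar b_m,b)$ and $a\models_i P(x)$ then $b\models_j P(x)$; (p-step) if $(\bar a_m,a)A(\bar b_m,b)$, $bR_jd$ and $m<k$ then there is $c\in U_i$ with $aR_ic$ and $(\bar a_m,a,c)\overset{\leftrightarrow}{A}(\bar b_m,b,d)$; (p-box-2) if $(\bar a_m,a)A(\bar b_m,b)$, $bR_jd$, $dR_{\Box j}f$ and $m+1<k$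 then there are $c,e\in U_i$ with $aR_ic$, $cR_{\Box i}e$ and $(\bar a_m,a,c,e)A(\bar b_m,b,d,f)$; (p-box-1) if $(\bar a_m,a)A(\bar b_m,b)$, $bR_{\Box j}d$ and $m<k$ then there is $c\in U_i$ with $aR_{\Box i}c$ and $(\bar a_m,a,c)A(\bar b_m,b,d)$; (p-diam-1) if $(\bar a_m,a)A(\bar b_m,b)$, $aR_{\Diamond i}c$ and $m<k$ then there is $d\in U_j$ with $bR_{\Diamond j}d$ and $(\bar a_m,a,c)A(\bar b_m,b,d)$; (p-diam-2(1)) if $(\bar a_m,a)A(\bar b_m,b)$, $bR_jd$ and $m+1<k$ then there is $c\in U_i$ with $aR_ic$ and $(\bar a_m,a,c)B(\bar b_m,b,d)$; (p-diam-2(2)) if $(\bar a_m,a)B(\bar b_m,b)$, $aR_{\Diamond i}c$ and $m<k$ then there is $d\in U_j$ with $bR_{\Diamond j}d$ and $(\bar a_m,a,c)A(\bar b_m,b,d)$. A $(2,1)$-modal $\langle(M_1,t),(M_2,u)\rangle_k$-asimulation is a relation $A$ satisfying p-type, elem, p-base, p-step, p-box-2, p-diam-1; a $(1,1)$-modal one is a relation $A$ satisfying p-type, elem, p-base, p-step, p-box-1, p-diam-1; a $(2,2)$-modal one is a pair $(A,B)$ satisfying p-type, p-B-type, elem, p-base, p-step, p-box-2, p-diam-2(1), p-diam-2(2); a $(1,2)$-modal one is a pair $(A,B)$ satisfying p-type, p-B-type, elem, p-base, p-step, p-box-1, p-diam-2(1), p-diam-2(2). Invariance: $\varphi(x)$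 is invariant with respect to $(i,j)$-modal $k$-asimulations iff for every $\Theta\supseteq\Sigma_\varphi$, all pointed $\Theta$-models $(M_1,t),(M_2,u)$, every $(i,j)$-modal $\langle(M_1,t),(M_2,u)\rangle_k$-asimulation (for $j=2$, its first component $A$ is used), and all $a\in U_1$, $b\in U_2$ with $aAb$ (as one-element tuples): if $a\models_1\varphi(x)$ then $b\models_2\varphi(x)$. *)

From Stdlib Require Import List Arith.
Import ListNotations.

Inductive brel := RR | RBox | RDia.

(* variables are natural numbers; P n is the unary letter P_n *)
Inductive fo : Type :=
| FBot : fo
| FRel : brel -> nat -> nat -> fo
| FP : nat -> nat -> fo
| FImp : fo -> fo -> fo
| FOr : fo -> fo -> fo
| FAnd : fo -> fo -> fo
| FAll : nat -> fo -> fo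
| FEx : nat -> fo -> fo.

Fixpoint free_in (v : nat) (phi : fo) : Prop :=
  match phi with
  | FBot => False
  | FRel _ a b => v = a \/ v = b
  | FP _ a => v = a
  | FImp p q | FOr p q | FAnd p q => free_in v p \/ free_in v q
  | FAll y p | FEx y p => v <> y /\ free_in v p
  end.

Fixpoint occursP (n : nat) (phi : fo) : Prop :=
  match phi with
  | FBot => False
  | FRel _ _ _ => False
  | FP m _ => n = m
  | FImp p q | FOr p q | FAnd p q => occursP n p \/ occursP n q
  | FAll _ p | FEx _ p => occursP n p
  end.

(* A structure interpreting all of Sigma.  A Theta-model is represented by
   such a structure of which only the letters in Theta are relevant. *)
Record model : Type := Model {
  dom : Type;
  iR : dom -> dom -> Prop;
  iBox : dom -> dom -> Prop;
  iDia : dom -> dom -> Prop;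
  iP : nat -> dom -> Prop }.

Definition irel (M : model) (r : brel) : dom M -> dom M -> Prop :=
  match r with RR => iR M | RBox => iBox M | RDia => iDia M end.

Definition upd {U : Type} (g : nat -> U) (x : nat) (a : U) : nat -> U :=
  fun v => if Nat.eqb v x then a else g v.

Fixpoint sat (M : model) (g : nat -> dom M) (phi : fo) : Prop :=
  match phi with
  | FBot => False
  | FRel r a b => irel M r (g a) (g b)
  | FP n a => iP M n (g a)
  | FImp p q => sat M g p -> sat M g q
  | FOr p q => sat M g p \/ sat M g q
  | FAnd p q => sat M g p /\ sat M g q
  | FAll y p => forall a : dom M, sat M (upd g y a) p
  | FEx y p => exists a : dom M, sat M (upd g y a) p
  end.

Definition log_equiv (phi psi : fo) : Prop :=
  forall (M : model) (g : nat -> dom M), sat M g phi <-> sat M g psi.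

Definition sat_at (M : model) (a : dom M) (x : nat) (phi : fo) : Prop :=
  forall g : nat -> dom M, g x = a -> sat M g phi.

Inductive mform : Type :=
| MVar : nat -> mform
| MBot : mform
| MAnd : mform -> mform -> mform
| MOr : mform -> mform -> mform
| MImp : mform -> mform -> mform
| MBox : mform -> mform
| MDia : mform -> mform.

Inductive idx := I1 | I2.

(* ST_{ij}(I, x); bound variables x+1, x+2 are fresh w.r.t. the only free variable x *)
Fixpoint ST (i j : idx) (I : mform) (x : nat) : fo :=
  let y := S x in let z := S (S x) in
  match I with
  | MVar n => FP n x
  | MBot => FBot
  | MAnd A B => FAnd (ST i j A x) (ST i j B x)
  | MOr A B => FOr (ST i j A x) (ST i j B x)
  | MImp A B => FAll y (FImp (FRel RR x y) (FImp (ST i j A y) (ST i j B y)))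
  | MBox A =>
      match i with
      | I1 => FAll y (FImp (FRel RBox x y) (ST i j A y))
      | I2 => FAll y (FImp (FRel RR x y)
                (FAll z (FImp (FRel RBox y z) (ST i j A z))))
      end
  | MDia A =>
      match j with
      | I1 => FEx y (FAnd (FRel RDia x y) (ST i j A y))
      | I2 => FAll y (FImp (FRel RR x y)
                (FEx z (FAnd (FRel RDia y z) (ST i j A z))))
      end
  end.

(* Tuples are lists; the tuple (a_1..a_m, a) is  as ++ [a].
   A relation A between tuples of U_1 and U_2 (in either direction) is
   represented by its two parts A12 : tuples of U1 -> tuples of U2 and
   A21 : tuples of U2 -> tuples of U1 (this encodes that A relates only
   U_1^n x U_2^n or U_2^n x U_1^n pairs). *)

Definition tupR (U V : Type) := list U -> list V -> Prop.

(* p-type / p-B-type (the remaining part: equal positive length) *)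
Definition p_type {U V} (A : tupR U V) : Prop :=
  forall s t, A s t -> length s = length t /\ 0 < length s.

Section Conds.
Variables (Th : nat -> Prop) (k : nat) (Mi Mj : model).
Let Ui := dom Mi.
Let Uj := dom Mj.
Variables (A B : tupR Ui Uj) (A' : tupR Uj Ui).

Definition p_base : Prop :=
  forall (as_ : list Ui) (bs : list Uj) (a : Ui) (b : Uj) (P : nat),
    length bs = length as_ -> A (as_ ++ [a]) (bs ++ [b]) ->
    Th P -> iP Mi P a -> iP Mj P b.

Definition p_step : Prop :=
  forall (as_ : list Ui) (bs : list Uj) (a : Ui) (b : Uj) (d : Uj),
    length bs = length as_ -> A (as_ ++ [a]) (bs ++ [b]) ->
    iR Mj b d -> length as_ < k ->
    exists c : Ui, iR Mi a c /\ A (as_ ++ [a; c]) (bs ++ [b; d])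
                   /\ A' (bs ++ [b; d]) (as_ ++ [a; c]).

Definition p_box_2 : Prop :=
  forall (as_ : list Ui) (bs : list Uj) (a : Ui) (b d f : Uj),
    length bs = length as_ -> A (as_ ++ [a]) (bs ++ [b]) ->
    iR Mj b d -> iBox Mj d f -> length as_ + 1 < k ->
    exists c e : Ui, iR Mi a c /\ iBox Mi c e /\
                     A (as_ ++ [a; c; e]) (bs ++ [b; d; f]).

Definition p_box_1 : Prop :=
  forall (as_ : list Ui) (bs : list Uj) (a : Ui) (b d : Uj),
    length bs = length as_ -> A (as_ ++ [a]) (bs ++ [b]) ->
    iBox Mj b d -> length as_ < k ->
    exists c : Ui, iBox Mi a c /\ A (as_ ++ [a; c]) (bs ++ [b; d]).

Definition p_diam_1 : Prop :=
  forall (as_ : list Ui) (bs : list Uj) (a c : Ui) (b : Uj),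
    length bs = length as_ -> A (as_ ++ [a]) (bs ++ [b]) ->
    iDia Mi a c -> length as_ < k ->
    exists d : Uj, iDia Mj b d /\ A (as_ ++ [a; c]) (bs ++ [b; d]).

Definition p_diam_2_1 : Prop :=
  forall (as_ : list Ui) (bs : list Uj) (a : Ui) (b d : Uj),
    length bs = length as_ -> A (as_ ++ [a]) (bs ++ [b]) ->
    iR Mj b d -> length as_ + 1 < k ->
    exists c : Ui, iR Mi a c /\ B (as_ ++ [a; c]) (bs ++ [b; d]).

Definition p_diam_2_2 : Prop :=
  forall (as_ : list Ui) (bs : list Uj) (a c : Ui) (b : Uj),
    length bs = length as_ -> B (as_ ++ [a]) (bs ++ [b]) ->
    iDia Mi a c -> length as_ < k ->
    exists d : Uj, iDia Mj b d /\ A (as_ ++ [a; c]) (bs ++ [b; d]).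

Definition dir_conds (bi bj : idx) : Prop :=
  p_base /\ p_step /\
  (match bi with I1 => p_box_1 | I2 => p_box_2 end) /\
  (match bj with I1 => p_diam_1 | I2 => p_diam_2_1 /\ p_diam_2_2 end).
End Conds.

(* (bi,bj)-modal <(M1,t),(M2,u)>_k-asimulation over Theta, given as the
   pair A = (A12, A21) and B = (B12, B21) (B is ignored when bj = I1). *)
Definition modal_asim (bi bj : idx) (Th : nat -> Prop) (k : nat)
  (M1 : model) (t : dom M1) (M2 : model) (u : dom M2)
  (A12 B12 : tupR (dom M1) (dom M2)) (A21 B21 : tupR (dom M2) (dom M1)) : Prop :=
  p_type A12 /\ p_type A21 /\
  (match bj with I1 => True | I2 => p_type B12 /\ p_type B21 end) /\
  A12 [t] [u] /\
  dir_conds Th k M1 M2 A12 B12 A21 bi bj /\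
  dir_conds Th k M2 M1 A21 B21 A12 bi bj.

Definition invariant (bi bj : idx) (k : nat) (x : nat) (phi : fo) : Prop :=
  forall (Th : nat -> Prop), (forall n, occursP n phi -> Th n) ->
  forall (M1 : model) (t : dom M1) (M2 : model) (u : dom M2),
    match bj with
    | I1 =>
        forall (A12 : tupR (dom M1) (dom M2)) (A21 : tupR (dom M2) (dom M1)),
          modal_asim bi bj Th k M1 t M2 u A12 (fun _ _ => False) A21 (fun _ _ => False) ->
          forall (a : dom M1) (b : dom M2), A12 [a] [b] ->
            sat_at M1 a x phi -> sat_at M2 b x phi
    | I2 =>
        forall (A12 B12 : tupR (dom M1) (dom M2)) (A21 B21 : tupR (dom M2) (dom M1)),
          modal_asim bi bj Th k M1 t M2 u A12 B12 A21 B21 ->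
          forall (a : dom M1) (b : dom M2), A12 [a] [b] ->
            sat_at M1 a x phi -> sat_at M2 b x phi
    end.

(* Forward direction: an (i,j)-modal k-asimulation transports the truth of every
   modal formula of depth at most k from the last entry of a tuple to the last entry
   of a related tuple, by induction on the formula.  Since ST_ij(I,x) is equivalent
   to phi, the letters of I that do not occur in phi can first be erased from both
   models without changing phi or the asimulation conditions, so that p-base applies
   to every letter.

   Backward direction: over the finitely many letters of phi there is, for each r,
   a finite list of modal "tests" of rank r rich enough to refute every
   back-and-forth clause.  "Every test of rank k - m true at the last entry of the
   first tuple is true at the last entry of the second one" is then a k-asimulation,
   so by invariance phi is implied by the conjunction of the rank-k tests true at
   any of its models; the disjunction of these finitely many conjunctions is the
   required modal formula. *)

From Stdlib Require Import List Arith Lia Classical ClassicalEpsilon.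
Import ListNotations.

Lemma upd_eq {U} (g : nat -> U) v a : upd g v a v = a.
Proof. unfold upd. now rewrite Nat.eqb_refl. Qed.

Lemma upd_neq {U} (g : nat -> U) v a w : w <> v -> upd g v a w = g w.
Proof. intro Hw. unfold upd. now destruct (Nat.eqb_spec w v). Qed.

Lemma sat_ext M phi : forall g g' : nat -> dom M,
  (forall v, free_in v phi -> g v = g' v) -> (sat M g phi <-> sat M g' phi).
Proof.
  induction phi; intros g g' Hgg'; simpl in *.
  - tauto.
  - now rewrite (Hgg' n (or_introl eq_refl)), (Hgg' n0 (or_intror eq_refl)).
  - now rewrite (Hgg' n0 eq_refl).
  - rewrite (IHphi1 g g'), (IHphi2 g g'); [tauto | intros; apply Hgg'; tauto ..].
  - rewrite (IHphi1 g g'), (IHphi2 g g'); [tauto | intros; apply Hgg'; tauto ..].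
  - rewrite (IHphi1 g g'), (IHphi2 g g'); [tauto | intros; apply Hgg'; tauto ..].
  - assert (Hupd : forall a, (sat M (upd g n a) phi <-> sat M (upd g' n a) phi)).
    { intro a. apply IHphi. intros v Hv. unfold upd.
      destruct (Nat.eqb_spec v n); auto. }
    now setoid_rewrite Hupd.
  - assert (Hupd : forall a, (sat M (upd g n a) phi <-> sat M (upd g' n a) phi)).
    { intro a. apply IHphi. intros v Hv. unfold upd.
      destruct (Nat.eqb_spec v n); auto. }
    now setoid_rewrite Hupd.
Qed.

Lemma sat_at_iff_sat M x phi (a : dom M) (g : nat -> dom M) :
  (forall v, free_in v phi -> v = x) -> g x = a -> (sat_at M a x phi <-> sat M g phi).
Proof.
  intros Hfree Hg. split.
  - intro Ha. now apply Ha.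
  - intros Hsat g' Hg'. apply (sat_ext M phi g g'); auto.
    intros v Hv. rewrite (Hfree v Hv). congruence.
Qed.

Definition restrict (Th : nat -> Prop) (M : model) : model :=
  Model (dom M) (iR M) (iBox M) (iDia M) (fun n a => Th n /\ iP M n a).

Lemma sat_restrict Th M phi : (forall n, occursP n phi -> Th n) ->
  forall g : nat -> dom M, sat (restrict Th M) g phi <-> sat M g phi.
Proof.
  induction phi; intros HTh g; simpl in *.
  - tauto.
  - now destruct b.
  - split; [tauto | auto].
  - rewrite IHphi1, IHphi2; auto; tauto.
  - rewrite IHphi1, IHphi2; auto; tauto.
  - rewrite IHphi1, IHphi2; auto; tauto.
  - now setoid_rewrite IHphi.
  - now setoid_rewrite IHphi.
Qed.

Fixpoint msat (i j : idx) (M : model) (w : dom M) (I : mform) : Prop :=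
  match I with
  | MVar n => iP M n w
  | MBot => False
  | MAnd A B => msat i j M w A /\ msat i j M w B
  | MOr A B => msat i j M w A \/ msat i j M w B
  | MImp A B => forall v, iR M w v -> msat i j M v A -> msat i j M v B
  | MBox A =>
      match i with
      | I1 => forall v, iBox M w v -> msat i j M v A
      | I2 => forall v, iR M w v -> forall u, iBox M v u -> msat i j M u A
      end
  | MDia A =>
      match j with
      | I1 => exists v, iDia M w v /\ msat i j M v A
      | I2 => forall v, iR M w v -> exists u, iDia M v u /\ msat i j M u A
      end
  end.

Lemma upd_succ {U} (g : nat -> U) x a : upd g (S x) a x = g x.
Proof. apply upd_neq. lia. Qed.

Lemma upd_succ2 {U} (g : nat -> U) x a : upd g (S (S x)) a x = g x.
Proof. apply upd_neq. lia. Qed.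

Lemma upd_succ2_succ {U} (g : nat -> U) x a : upd g (S (S x)) a (S x) = g (S x).
Proof. apply upd_neq. lia. Qed.

Lemma sat_ST i j M I : forall x (g : nat -> dom M),
  sat M g (ST i j I x) <-> msat i j M (g x) I.
Proof.
  induction I; intros x g; simpl; try (destruct i); try (destruct j); simpl;
    repeat (setoid_rewrite IHI1 || setoid_rewrite IHI2 || setoid_rewrite IHI);
    repeat (setoid_rewrite upd_eq || setoid_rewrite upd_succ || setoid_rewrite upd_succ2
            || setoid_rewrite upd_succ2_succ); tauto.
Qed.

Lemma app_snoc2 {U} (l : list U) a c : l ++ [a; c] = (l ++ [a]) ++ [c].
Proof. now rewrite <- app_assoc. Qed.

Lemma app_snoc3 {U} (l : list U) a c e : l ++ [a; c; e] = (l ++ [a; c]) ++ [e].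
Proof. now rewrite <- app_assoc. Qed.

Ltac solve_length := rewrite ?length_app; simpl; lia.

Section Preservation.
Variables (i j : idx) (k : nat) (Th : nat -> Prop).

Fixpoint mdepth (I : mform) : nat :=
  match I with
  | MVar _ | MBot => 0
  | MAnd A B | MOr A B => max (mdepth A) (mdepth B)
  | MImp A B => S (max (mdepth A) (mdepth B))
  | MBox A => (match i with I1 => 1 | I2 => 2 end) + mdepth A
  | MDia A => (match j with I1 => 1 | I2 => 2 end) + mdepth A
  end.

Definition transfers (I : mform) : Prop := forall (Mi Mj : model) A B A' B',
  (forall P a, iP Mi P a -> Th P) -> (forall P a, iP Mj P a -> Th P) ->
  dir_conds Th k Mi Mj A B A' i j -> dir_conds Th k Mj Mi A' B' A i j ->
  forall as_ bs a b, length bs = length as_ -> A (as_ ++ [a]) (bs ++ [b]) ->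
  length as_ + mdepth I <= k -> msat i j Mi a I -> msat i j Mj b I.

Lemma transfers_var n : transfers (MVar n).
Proof.
  intros Mi Mj A B A' B' HThi _ (Hbase & _) _ as_ bs a b Hl HA _ HP.
  exact (Hbase as_ bs a b n Hl HA (HThi n a HP) HP).
Qed.

Lemma transfers_bot : transfers MBot.
Proof. intros Mi Mj A B A' B' _ _ _ _ as_ bs a b _ _ _ []. Qed.

Lemma transfers_and I1 I2 : transfers I1 -> transfers I2 -> transfers (MAnd I1 I2).
Proof.
  intros IH1 IH2 Mi Mj A B A' B' HThi HThj D D' as_ bs a b Hl HA Hk [H1 H2]. simpl in Hk.
  split; [apply (IH1 Mi Mj A B A' B' HThi HThj D D' as_ bs a)
         | apply (IH2 Mi Mj A B A' B' HThi HThj D D' as_ bs a)]; auto; lia.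
Qed.

Lemma transfers_or I1 I2 : transfers I1 -> transfers I2 -> transfers (MOr I1 I2).
Proof.
  intros IH1 IH2 Mi Mj A B A' B' HThi HThj D D' as_ bs a b Hl HA Hk [H1 | H2]; simpl in Hk.
  - left. apply (IH1 Mi Mj A B A' B' HThi HThj D D' as_ bs a); auto. lia.
  - right. apply (IH2 Mi Mj A B A' B' HThi HThj D D' as_ bs a); auto. lia.
Qed.

Lemma transfers_imp I1 I2 : transfers I1 -> transfers I2 -> transfers (MImp I1 I2).
Proof.
  intros IH1 IH2 Mi Mj A B A' B' HThi HThj D D' as_ bs a b Hl HA Hk Himp d Hbd Hd.
  simpl in Hk. pose proof D as (_ & Hstep & _).
  destruct (Hstep as_ bs a b d Hl HA Hbd ltac:(lia)) as (c & Hac & Hcd & Hdc).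
  rewrite !app_snoc2 in Hcd, Hdc.
  apply (IH2 Mi Mj A B A' B' HThi HThj D D' (as_ ++ [a]) (bs ++ [b]) c d);
    [solve_length | exact Hcd | solve_length |].
  apply Himp; [exact Hac |].
  apply (IH1 Mj Mi A' B' A B HThj HThi D' D (bs ++ [b]) (as_ ++ [a]) d c);
    [solve_length | exact Hdc | solve_length | exact Hd].
Qed.

Lemma transfers_box I : transfers I -> transfers (MBox I).
Proof.
  unfold transfers. intros IH Mi Mj A B A' B' HThi HThj D D' as_ bs a b Hl HA Hk.
  pose proof D as (_ & _ & Hbox & _). simpl in *. destruct i.
  - intros Hall d Hbd.
    destruct (Hbox as_ bs a b d Hl HA Hbd ltac:(lia)) as (c & Hac & Hcd).
    rewrite !app_snoc2 in Hcd.
    apply (IH Mi Mj A B A' B' HThi HThj D D' (as_ ++ [a]) (bs ++ [b]) c d);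
      [solve_length | exact Hcd | solve_length | exact (Hall c Hac)].
  - intros Hall d Hbd f Hdf.
    destruct (Hbox as_ bs a b d f Hl HA Hbd Hdf ltac:(lia)) as (c & e & Hac & Hce & Hef).
    rewrite !app_snoc3 in Hef.
    apply (IH Mi Mj A B A' B' HThi HThj D D' (as_ ++ [a; c]) (bs ++ [b; d]) e f);
      [solve_length | exact Hef | solve_length | exact (Hall c Hac e Hce)].
Qed.

Lemma transfers_dia I : transfers I -> transfers (MDia I).
Proof.
  unfold transfers. intros IH Mi Mj A B A' B' HThi HThj D D' as_ bs a b Hl HA Hk.
  pose proof D as (_ & _ & _ & Hdia). simpl in *. destruct j.
  - intros (c & Hac & Hc).
    destruct (Hdia as_ bs a c b Hl HA Hac ltac:(lia)) as (d & Hbd & Hcd).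
    exists d. split; [exact Hbd |].
    rewrite !app_snoc2 in Hcd.
    apply (IH Mi Mj A B A' B' HThi HThj D D' (as_ ++ [a]) (bs ++ [b]) c d);
      [solve_length | exact Hcd | solve_length | exact Hc].
  - destruct Hdia as [HdiaR HdiaB]. intros Hall d Hbd.
    destruct (HdiaR as_ bs a b d Hl HA Hbd ltac:(lia)) as (c & Hac & HBcd).
    destruct (Hall c Hac) as (e & Hce & He).
    rewrite !app_snoc2 in HBcd.
    destruct (HdiaB (as_ ++ [a]) (bs ++ [b]) c e d ltac:(solve_length) HBcd Hce
      ltac:(solve_length)) as (f & Hdf & Hef).
    exists f. split; [exact Hdf |].
    rewrite <- !app_assoc in Hef. simpl in Hef. rewrite !app_snoc3 in Hef.
    apply (IH Mi Mj A B A' B' HThi HThj D D' (as_ ++ [a; c]) (bs ++ [b; d]) e f);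
      [solve_length | exact Hef | solve_length | exact He].
Qed.

Lemma transfers_all I : transfers I.
Proof.
  induction I; auto using transfers_var, transfers_bot, transfers_and, transfers_or,
    transfers_imp, transfers_box, transfers_dia.
Qed.

Lemma dir_conds_restrict M1 M2 A B A' :
  dir_conds Th k M1 M2 A B A' i j ->
  dir_conds Th k (restrict Th M1) (restrict Th M2) A B A' i j.
Proof.
  intros (Hbase & Hrest). split; [| exact Hrest].
  intros as_ bs a b P Hl HA HP [_ Ha]. split; [exact HP |]. eapply Hbase; eauto.
Qed.

End Preservation.

Fixpoint sublists {U} (l : list U) : list (list U) :=
  match l with
  | [] => [[]]
  | a :: l' => map (cons a) (sublists l') ++ sublists l'
  end.

Lemma filter_in_sublists {U} (f : U -> bool) l : In (filter f l) (sublists l).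
Proof.
  induction l as [| a l IH]; simpl; auto.
  destruct (f a); apply in_or_app; [left; apply in_map | right]; exact IH.
Qed.

Definition decide (P : Prop) : bool :=
  if excluded_middle_informative P then true else false.

Lemma decide_spec P : decide P = true <-> P.
Proof. unfold decide. destruct (excluded_middle_informative P); split; auto; discriminate. Qed.

Lemma in_filter_decide {U} (P : U -> Prop) l a :
  In a (filter (fun b => decide (P b)) l) <-> In a l /\ P a.
Proof. rewrite filter_In, decide_spec. reflexivity. Qed.

Definition mtop : mform := MImp MBot MBot.

Fixpoint conj_list (l : list mform) : mform :=
  match l with [] => mtop | a :: l' => MAnd a (conj_list l') end.

Fixpoint disj_list (l : list mform) : mform :=
  match l with [] => MBot | a :: l' => MOr a (disj_list l') end.

Definition dnf (SS : list (list mform)) : mform := disj_list (map conj_list SS).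

Section MsatUnfold.
Variables (i j : idx) (M : model) (w : dom M).

Lemma msat_conj_list l : msat i j M w (conj_list l) <-> forall a, In a l -> msat i j M w a.
Proof.
  induction l as [| a l IH]; simpl.
  - split; [tauto | intros _ v _ H; exact H].
  - rewrite IH. split; [intros [H1 H2] b [<- | Hb]; auto | intros H; split; auto].
Qed.

Lemma msat_disj_list l : msat i j M w (disj_list l) <-> exists a, In a l /\ msat i j M w a.
Proof.
  induction l as [| a l IH]; simpl.
  - split; [tauto | intros (b & [] & _)].
  - rewrite IH. split.
    + intros [H | (b & Hb & H)]; eauto.
    + intros (b & [<- | Hb] & H); eauto.
Qed.

Lemma msat_dnf SS :
  msat i j M w (dnf SS) <-> exists Sl, In Sl SS /\ msat i j M w (conj_list Sl).
Proof.
  unfold dnf. rewrite msat_disj_list. split.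
  - intros (a & Ha & H). apply in_map_iff in Ha as (Sl & <- & HS). eauto.
  - intros (Sl & HS & H). exists (conj_list Sl). split; auto. now apply in_map.
Qed.

Lemma msat_box_1 A : i = I1 ->
  (msat i j M w (MBox A) <-> forall v, iBox M w v -> msat i j M v A).
Proof. now intros ->. Qed.

Lemma msat_box_2 A : i = I2 ->
  (msat i j M w (MBox A) <-> forall v, iR M w v -> forall u, iBox M v u -> msat i j M u A).
Proof. now intros ->. Qed.

Lemma msat_dia_1 A : j = I1 ->
  (msat i j M w (MDia A) <-> exists v, iDia M w v /\ msat i j M v A).
Proof. now intros ->. Qed.

Lemma msat_dia_2 A : j = I2 ->
  (msat i j M w (MDia A) <-> forall v, iR M w v -> exists u, iDia M v u /\ msat i j M u A).
Proof. now intros ->. Qed.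

End MsatUnfold.

Definition last_rel {U V} (R : nat -> U -> V -> Prop) : tupR U V := fun s t =>
  exists as_ bs a b, s = as_ ++ [a] /\ t = bs ++ [b] /\ length as_ = length bs /\
    R (length as_) a b.

Lemma last_rel_elim {U V} (R : nat -> U -> V -> Prop) as_ bs a b :
  last_rel R (as_ ++ [a]) (bs ++ [b]) -> R (length as_) a b.
Proof.
  intros (as' & bs' & a' & b' & E1 & E2 & _ & H).
  apply app_inj_tail in E1 as [-> ->]. apply app_inj_tail in E2 as [-> ->]. exact H.
Qed.

Lemma last_rel_intro {U V} (R : nat -> U -> V -> Prop) as_ bs a b :
  length as_ = length bs -> R (length as_) a b -> last_rel R (as_ ++ [a]) (bs ++ [b]).
Proof. intros. now exists as_, bs, a, b. Qed.

Lemma last_rel_type {U V} (R : nat -> U -> V -> Prop) : p_type (last_rel R).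
Proof. intros s t (as_ & bs & a & b & -> & -> & Hl & _). solve_length. Qed.

Section CanonicalAsimulation.
Variables (i j : idx) (k : nat) (Th : nat -> Prop) (vs : list nat).
Hypothesis Hvs : forall n, Th n -> In n vs.

(* The formulas added at rank S r refute the back-and-forth clauses: implications
   for p-step, boxes for p-box, diamonds of conjunctions for p-diam-1 and
   p-diam-2(2), diamonds of disjunctive normal forms for p-diam-2(1). *)
Fixpoint tests (r : nat) : list mform :=
  match r with
  | 0 => map MVar vs
  | S r =>
      let L := tests r in
      let SL := sublists L in
      L ++ map (fun p => MImp (conj_list (fst p)) (disj_list (snd p))) (list_prod SL SL)
        ++ map (fun Sl => MBox (disj_list Sl)) SL
        ++ map (fun Sl => MDia (conj_list Sl)) SL
        ++ map (fun SS => MDia (dnf SS)) (sublists SL)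
  end.

Lemma tests_mono r r' : r <= r' -> incl (tests r) (tests r').
Proof.
  induction 1; [apply incl_refl |].
  eapply incl_tran; [eassumption |]. intros A HA. simpl. apply in_or_app; auto.
Qed.

Lemma tests_imp r S1 S2 : In S1 (sublists (tests r)) -> In S2 (sublists (tests r)) ->
  In (MImp (conj_list S1) (disj_list S2)) (tests (S r)).
Proof.
  intros H1 H2. simpl. apply in_or_app; right. apply in_or_app; left.
  apply in_map_iff. exists (S1, S2). split; auto. now apply in_prod.
Qed.

Lemma tests_box r Sl : In Sl (sublists (tests r)) -> In (MBox (disj_list Sl)) (tests (S r)).
Proof.
  intros H. simpl. do 2 (apply in_or_app; right). apply in_or_app; left.
  now apply (in_map (fun Sl => MBox (disj_list Sl))).
Qed.

Lemma tests_dia_conj r Sl : In Sl (sublists (tests r)) -> In (MDia (conj_list Sl)) (tests (S r)).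
Proof.
  intros H. simpl. do 3 (apply in_or_app; right). apply in_or_app; left.
  now apply (in_map (fun Sl => MDia (conj_list Sl))).
Qed.

Lemma tests_dia_dnf r SS : In SS (sublists (sublists (tests r))) -> In (MDia (dnf SS)) (tests (S r)).
Proof.
  intros H. simpl. do 4 (apply in_or_app; right).
  now apply (in_map (fun SS => MDia (dnf SS))).
Qed.

Definition type_le (M N : model) (r : nat) (a : dom M) (b : dom N) : Prop :=
  forall A, In A (tests r) -> msat i j M a A -> msat i j N b A.

Definition dia_sat (M : model) (c : dom M) (A : mform) : Prop :=
  exists e, iDia M c e /\ msat i j M e A.

Definition dia_type_le (M N : model) (r : nat) (c : dom M) (d : dom N) : Prop :=
  forall Sl, In Sl (sublists (tests r)) -> dia_sat M c (conj_list Sl) -> dia_sat N d (conj_list Sl).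

Definition type_rel (M N : model) : tupR (dom M) (dom N) :=
  last_rel (fun m => type_le M N (k - m)).

Definition dia_type_rel (M N : model) : tupR (dom M) (dom N) :=
  last_rel (fun m => dia_type_le M N (k - S m)).

Definition true_tests (M : model) (w : dom M) (r : nat) : list mform :=
  filter (fun A => decide (msat i j M w A)) (tests r).

Definition false_tests (M : model) (w : dom M) (r : nat) : list mform :=
  filter (fun A => decide (~ msat i j M w A)) (tests r).

Lemma msat_true_tests M w r : msat i j M w (conj_list (true_tests M w r)).
Proof.
  apply msat_conj_list. intros A HA. now apply in_filter_decide in HA.
Qed.

Lemma type_le_true_tests M N w r (f : dom N) :
  msat i j N f (conj_list (true_tests M w r)) -> type_le M N r w f.
Proof.
  rewrite msat_conj_list. intros H A HA Hw. apply H. now apply in_filter_decide.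
Qed.

Lemma not_msat_false_tests M w r : ~ msat i j M w (disj_list (false_tests M w r)).
Proof.
  rewrite msat_disj_list. intros (A & HA & H). now apply in_filter_decide in HA.
Qed.

Lemma msat_false_tests M N w r (c : dom N) :
  ~ type_le N M r c w -> msat i j N c (disj_list (false_tests M w r)).
Proof.
  intro Hle. apply NNPP. rewrite msat_disj_list. intro Hn. apply Hle.
  intros A HA Hc. apply NNPP. intro Hw. apply Hn. exists A. split; auto.
  now apply in_filter_decide.
Qed.

Lemma type_le_mono M N r r' a b : r <= r' -> type_le M N r' a b -> type_le M N r a b.
Proof. intros Hr H A HA. apply H. exact (tests_mono r r' Hr A HA). Qed.

Lemma type_rel_snoc M N as_ bs a b c d : length as_ = length bs ->
  type_le M N (k - S (length as_)) c d -> type_rel M N (as_ ++ [a; c]) (bs ++ [b; d]).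
Proof.
  intros Hl H. rewrite !app_snoc2. apply last_rel_intro; [solve_length |].
  rewrite length_app, Nat.add_1_r. exact H.
Qed.

Lemma type_rel_snoc2 M N as_ bs a b c d e f : length as_ = length bs ->
  type_le M N (k - S (S (length as_))) e f ->
  type_rel M N (as_ ++ [a; c; e]) (bs ++ [b; d; f]).
Proof.
  intros Hl H. rewrite !app_snoc3. apply last_rel_intro; [solve_length |].
  replace (length (as_ ++ [a; c])) with (S (S (length as_))) by solve_length. exact H.
Qed.

Lemma dia_type_rel_snoc M N as_ bs a b c d : length as_ = length bs ->
  dia_type_le M N (k - S (S (length as_))) c d ->
  dia_type_rel M N (as_ ++ [a; c]) (bs ++ [b; d]).
Proof.
  intros Hl H. rewrite !app_snoc2. apply last_rel_intro; [solve_length |].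
  rewrite length_app, Nat.add_1_r. exact H.
Qed.

Lemma type_rel_base M N : p_base Th M N (type_rel M N).
Proof.
  intros as_ bs a b P Hl HA HP Ha. apply last_rel_elim in HA.
  apply (HA (MVar P)); [| exact Ha].
  apply (tests_mono 0); [lia |]. simpl. now apply in_map, Hvs.
Qed.

Lemma type_rel_step M N : p_step k M N (type_rel M N) (type_rel N M).
Proof.
  intros as_ bs a b d Hl HA Hbd Hk. apply last_rel_elim in HA.
  replace (k - length as_) with (S (k - S (length as_))) in HA by lia.
  set (r := k - S (length as_)) in *.
  apply NNPP. intro Hn.
  assert (Ha : msat i j M a (MImp (conj_list (true_tests N d r)) (disj_list (false_tests N d r)))).
  { simpl. intros c Hac Hc. apply msat_false_tests. intro Hcd.
    apply Hn. exists c. split; [exact Hac |].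
    split; apply type_rel_snoc; auto.
    rewrite Hl. now apply type_le_true_tests. }
  apply HA in Ha; [| apply tests_imp; apply filter_in_sublists].
  apply (not_msat_false_tests N d r), Ha; [exact Hbd | apply msat_true_tests].
Qed.

Lemma type_rel_box_1 M N : i = I1 -> p_box_1 k M N (type_rel M N).
Proof.
  intros Hi as_ bs a b d Hl HA Hbd Hk. apply last_rel_elim in HA.
  replace (k - length as_) with (S (k - S (length as_))) in HA by lia.
  set (r := k - S (length as_)) in *.
  apply NNPP. intro Hn.
  assert (Ha : msat i j M a (MBox (disj_list (false_tests N d r)))).
  { apply msat_box_1; [exact Hi |]. intros c Hac. apply msat_false_tests. intro Hcd.
    apply Hn. exists c. split; [exact Hac |]. now apply type_rel_snoc. }
  apply HA in Ha; [| apply tests_box, filter_in_sublists].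
  rewrite msat_box_1 in Ha by exact Hi.
  exact (not_msat_false_tests N d r (Ha d Hbd)).
Qed.

Lemma type_rel_box_2 M N : i = I2 -> p_box_2 k M N (type_rel M N).
Proof.
  intros Hi as_ bs a b d f Hl HA Hbd Hdf Hk. apply last_rel_elim in HA.
  replace (k - length as_) with (S (S (k - S (S (length as_))))) in HA by lia.
  set (r := k - S (S (length as_))) in *.
  apply NNPP. intro Hn.
  assert (Ha : msat i j M a (MBox (disj_list (false_tests N f r)))).
  { apply msat_box_2; [exact Hi |]. intros c Hac e Hce. apply msat_false_tests.
    intro Hef. apply Hn. exists c, e. repeat split; auto. now apply type_rel_snoc2. }
  apply (type_le_mono M N (S r)) in HA; [| lia].
  apply HA in Ha; [| apply tests_box, filter_in_sublists].
  rewrite msat_box_2 in Ha by exact Hi.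
  exact (not_msat_false_tests N f r (Ha d Hbd f Hdf)).
Qed.

Lemma type_rel_dia_1 M N : j = I1 -> p_diam_1 k M N (type_rel M N).
Proof.
  intros Hj as_ bs a c b Hl HA Hac Hk. apply last_rel_elim in HA.
  replace (k - length as_) with (S (k - S (length as_))) in HA by lia.
  set (r := k - S (length as_)) in *.
  assert (Ha : msat i j M a (MDia (conj_list (true_tests M c r)))).
  { apply msat_dia_1; [exact Hj |]. exists c. split; [exact Hac | apply msat_true_tests]. }
  apply HA in Ha; [| apply tests_dia_conj, filter_in_sublists].
  rewrite msat_dia_1 in Ha by exact Hj. destruct Ha as (d & Hbd & Hd).
  exists d. split; [exact Hbd |]. now apply type_rel_snoc, type_le_true_tests.
Qed.

Lemma type_rel_dia_2_1 M N : j = I2 -> p_diam_2_1 k M N (type_rel M N) (dia_type_rel M N).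
Proof.
  intros Hj as_ bs a b d Hl HA Hbd Hk. apply last_rel_elim in HA.
  replace (k - length as_) with (S (S (k - S (S (length as_))))) in HA by lia.
  set (r := k - S (S (length as_))) in *.
  apply NNPP. intro Hn.
  set (SS := filter (fun Sl => decide (~ dia_sat N d (conj_list Sl))) (sublists (tests r))).
  assert (Ha : msat i j M a (MDia (dnf SS))).
  { apply msat_dia_2; [exact Hj |]. intros c Hac.
    assert (Hcd : ~ dia_type_le M N r c d).
    { intro Hcd. apply Hn. exists c. split; [exact Hac |]. now apply dia_type_rel_snoc. }
    apply NNPP. intro Hc. apply Hcd. intros Sl HSl (e & Hce & He).
    apply NNPP. intro Hd. apply Hc. exists e. split; [exact Hce |].
    apply msat_dnf. exists Sl. split; [now apply in_filter_decide | exact He]. }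
  apply (type_le_mono M N (S r)) in HA; [| lia].
  apply HA in Ha; [| apply tests_dia_dnf, filter_in_sublists].
  rewrite msat_dia_2 in Ha by exact Hj.
  destruct (Ha d Hbd) as (f & Hdf & Hf).
  apply msat_dnf in Hf as (Sl & HSl & Hf). apply in_filter_decide in HSl as [_ HSl].
  apply HSl. now exists f.
Qed.

Lemma type_rel_dia_2_2 M N : p_diam_2_2 k M N (type_rel M N) (dia_type_rel M N).
Proof.
  intros as_ bs a c b Hl HB Hac Hk. apply last_rel_elim in HB.
  set (r := k - S (length as_)) in *.
  destruct (HB (true_tests M c r)) as (d & Hbd & Hd).
  - apply filter_in_sublists.
  - exists c. split; [exact Hac | apply msat_true_tests].
  - exists d. split; [exact Hbd |]. now apply type_rel_snoc, type_le_true_tests.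
Qed.

Lemma type_rel_dir_conds M N :
  dir_conds Th k M N (type_rel M N) (dia_type_rel M N) (type_rel N M) i j.
Proof.
  split; [apply type_rel_base | split; [apply type_rel_step | split]].
  - destruct i eqn:Hi; [apply type_rel_box_1 | apply type_rel_box_2]; auto.
  - destruct j eqn:Hj;
      [apply type_rel_dia_1; auto | split; [apply type_rel_dia_2_1; auto | apply type_rel_dia_2_2]].
Qed.

Lemma type_rel_root M N (w : dom M) (f : dom N) : type_le M N k w f -> type_rel M N [w] [f].
Proof.
  intro H. apply (last_rel_intro _ [] [] w f); [reflexivity |]. simpl. now rewrite Nat.sub_0_r.
Qed.

Lemma type_le_modal_asim M N (w : dom M) (f : dom N) : type_le M N k w f ->
  modal_asim i j Th k M w N f (type_rel M N) (dia_type_rel M N) (type_rel N M) (dia_type_rel N M).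
Proof.
  intro H. split; [apply last_rel_type | split; [apply last_rel_type | split]].
  - destruct j; [exact I | split; apply last_rel_type].
  - split; [now apply type_rel_root | split; apply type_rel_dir_conds].
Qed.

End CanonicalAsimulation.

Lemma invariant_intro i j k x phi :
  (forall Th, (forall n, occursP n phi -> Th n) ->
   forall M1 t M2 u A12 B12 A21 B21, modal_asim i j Th k M1 t M2 u A12 B12 A21 B21 ->
   forall a b, A12 [a] [b] -> sat_at M1 a x phi -> sat_at M2 b x phi) ->
  invariant i j k x phi.
Proof. intros H Th HTh M1 t M2 u. destruct j; intros *; apply H; exact HTh. Qed.

Lemma invariant_elim i j k x phi Th M1 t M2 u A12 B12 A21 B21 a b :
  invariant i j k x phi -> (forall n, occursP n phi -> Th n) ->
  modal_asim i j Th k M1 t M2 u A12 B12 A21 B21 -> A12 [a] [b] ->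
  sat_at M1 a x phi -> sat_at M2 b x phi.
Proof.
  intros Hinv HTh. specialize (Hinv Th HTh M1 t M2 u).
  destruct j; intro Has; [exact (Hinv A12 A21 Has a b) | exact (Hinv A12 B12 A21 B21 Has a b)].
Qed.

Lemma ST_invariant i j x phi I :
  log_equiv phi (ST i j I x) -> invariant i j (mdepth i j I) x phi.
Proof.
  intros HI. apply invariant_intro.
  intros Th HTh M1 t M2 u A12 B12 A21 B21 (_ & _ & _ & _ & D12 & D21) a b Hab Ha g Hg.
  assert (H1 : msat i j (restrict Th M1) a I).
  { rewrite <- (sat_ST i j (restrict Th M1) I x (fun _ => a)).
    apply HI, sat_restrict, Ha; auto. }
  assert (H2 : msat i j (restrict Th M2) b I).
  { apply (transfers_all i j (mdepth i j I) Th I (restrict Th M1) (restrict Th M2)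
      A12 B12 A21 B21) with (as_ := []) (bs := []) (a := a); simpl; auto.
    - intros P a' [HP _]. exact HP.
    - intros P a' [HP _]. exact HP.
    - now apply dir_conds_restrict.
    - now apply dir_conds_restrict. }
  rewrite <- Hg, <- (sat_ST i j (restrict Th M2) I x g) in H2.
  apply HI, sat_restrict in H2; assumption.
Qed.

Fixpoint letters (phi : fo) : list nat :=
  match phi with
  | FP n _ => [n]
  | FImp p q | FOr p q | FAnd p q => letters p ++ letters q
  | FAll _ p | FEx _ p => letters p
  | _ => []
  end.

Lemma occursP_letters n phi : occursP n phi -> In n (letters phi).
Proof.
  induction phi; simpl; try tauto; try (intros ->; left; reflexivity);
    intros [H | H]; apply in_or_app; auto.
Qed.

Section Definability.
Variables (i j : idx) (k x : nat) (phi : fo).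
Hypothesis Hinv : invariant i j k x phi.

Definition forces_phi (Sl : list mform) : Prop :=
  forall (M : model) (f : dom M), msat i j M f (conj_list Sl) -> sat_at M f x phi.

Definition characteristic_formula : mform :=
  dnf (filter (fun Sl => decide (forces_phi Sl)) (sublists (tests (letters phi) k))).

Lemma sat_at_characteristic_formula M (w : dom M) :
  sat_at M w x phi <-> msat i j M w characteristic_formula.
Proof.
  split.
  - intros Hw. apply msat_dnf. exists (true_tests i j (letters phi) M w k).
    split; [| apply msat_true_tests].
    apply in_filter_decide. split; [apply filter_in_sublists |].
    intros N f Hf. apply type_le_true_tests in Hf.
    pose proof (fun n => occursP_letters n phi) as Hletters.
    eapply (invariant_elim i j k x phi (fun n => occursP n phi)).
    + exact Hinv.
    + exact (fun n H => H).
    + exact (type_le_modal_asim i j k _ _ Hletters M N w f Hf).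
    + exact (type_rel_root i j k _ M N w f Hf).
    + exact Hw.
  - intros Hw. apply msat_dnf in Hw as (Sl & HSl & H).
    apply in_filter_decide in HSl as [_ HSl]. exact (HSl M w H).
Qed.

End Definability.

Theorem theorem1 (i j : idx) (x : nat) (phi : fo) :
  (forall v, free_in v phi -> v = x) ->
  ((exists I : mform, log_equiv phi (ST i j I x)) <->
   (exists k : nat, invariant i j k x phi)).
Proof.
  intros Hfree. split.
  - intros [I HI]. exists (mdepth i j I). now apply ST_invariant.
  - intros [k Hinv]. exists (characteristic_formula i j k x phi).
    intros M g. rewrite sat_ST, <- (sat_at_characteristic_formula i j k x phi Hinv).
    symmetry. now apply sat_at_iff_sat.
Qed.
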